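(* For every $d\ge 1$ there exists $\beta_d>0$ such that the following holds. Let $\Delta,\Delta'\subset\mathbb{R}^d$ be vertex sets of regular simplices of edge length $1$ with $\mathrm{diam}(\Delta\cup\Delta')\le 1+\beta$ for some $0\le\beta<\beta_d$. Then \[ \mathrm{dist}_H(\Delta,\Delta')\le (d+1)d^2\,\beta . \]
   Context: A regular simplex of edge length $1$ in $\mathbb{R}^d$ is (identified with) its vertex set: $d+1$ points at pairwise Euclidean distance exactly $1$. $\mathrm{diam}(A)=\sup_{x,y\in A}\|x-y\|_2$. For nonempty compact $A,B\subset\mathbb{R}^d$, the Hausdorff distance is $\mathrm{dist}_H(A,B)=\max\{\sup_{a\in A}\inf_{b\in B}\|a-b\|_2,\ \sup_{b\in B}\inf_{a\in A}\|a-b\|_2\}$. *)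

From mathcomp Require Import all_boot all_order all_algebra.
From mathcomp Require Import all_classical all_reals.
Set Implicit Arguments. Unset Strict Implicit. Unset Printing Implicit Defensive.
Import Order.TTheory GRing.Theory Num.Theory.
Local Open Scope ring_scope.
Local Open Scope classical_set_scope.

Definition edist {R : realType} {d : nat} (x y : 'rV[R]_d) : R :=
  Num.sqrt (\sum_(i < d) (x 0 i - y 0 i) ^+ 2).

Definition regular_simplex {R : realType} {d : nat} (v : 'I_d.+1 -> 'rV[R]_d) : Prop :=
  forall i j : 'I_d.+1, i != j -> edist (v i) (v j) = 1.

Definition diam {R : realType} {d : nat} (A : set 'rV[R]_d) : R :=
  sup [set r | exists x y, A x /\ A y /\ r = edist x y].

Definition hexcess {R : realType} {d : nat} (A B : set 'rV[R]_d) : R :=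
  sup [set r | exists a, A a /\ r = inf [set s | exists b, B b /\ s = edist a b]].

Definition dist_H {R : realType} {d : nat} (A B : set 'rV[R]_d) : R :=
  Num.max (hexcess A B) (hexcess B A).

(* Let c be the centroid of the regular simplex v and p_k := v_k - c.  Their
   Gram matrix is (I - J / (d + 1)) / 2 and the edges v_k - v_0 form a basis,
   so the p_k form a tight frame: \sum_k <y, p_k>^2 = |y|^2 / 2 for every y.

   Let w be a point at squared distance at most 1 + e from every vertex.  The
   coordinates g_k := <w - c, p_k> - L, with L chosen so that these distance
   bounds read g_k >= 0, satisfy \sum g_k = -(d + 1) L and, by the frame
   identity, \sum g_k^2 = |w - c|^2 / 2 + (d + 1) L^2.  Comparing with
   (\sum g)^2 bounds |w - c|^2 by r^2 + e (r the circumradius); comparing with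
   (max g) \sum g puts w within squared distance (d^2 + 2d) e + (d + 1)^2 e^2
   of the vertex maximising g, provided |w - c|^2 >= r^2 - d e.  That lower
   bound comes from the other simplex, whose moment of inertia about any point
   is at least d / 2 = (d + 1) r^2.

   The matching is then bootstrapped: if every vertex of either simplex has a
   partner in the other within squared distance r < 1/4, then for
   h = w_j - v_m every coordinate <h, v_m - v_k> lies in [-(e/2 + 2r), e/2],
   and the frame identity gives |h|^2 <= 2 d (e/2 + 2r)^2.  For
   e = 2 beta + beta^2, two rounds give |h| <= (d + 1) d^2 beta. *)

From mathcomp Require Import all_boot all_order all_algebra.
From mathcomp Require Import all_classical all_reals.
From mathcomp Require Import ring lra.
Import Order.TTheory GRing.Theory Num.Theory.
Local Open Scope ring_scope.

Section NonnegSums.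
Context {R : numDomainType} {n : nat}.
Implicit Types x : 'I_n -> R.

Lemma ler_term_sum x j : (forall k, 0 <= x k) -> x j <= \sum_k x k.
Proof. by move=> x_ge0; rewrite (bigD1 j) //= lerDl sumr_ge0. Qed.

Lemma sum_sqr_le_mul_sum x M :
  (forall k, 0 <= x k <= M) -> \sum_k x k ^+ 2 <= M * \sum_k x k.
Proof.
move=> x_bound; rewrite mulr_sumr; apply: ler_sum => k _; rewrite expr2.
by have /andP[x_ge0 x_le] := x_bound k; apply: ler_wpM2r.
Qed.

End NonnegSums.

Section InnerProduct.
Context {R : realFieldType} {d : nat}.
Implicit Types x y z p q a b : 'rV[R]_d.

Definition dot x y : R := \sum_i x 0 i * y 0 i.
Definition sqnorm x : R := dot x x.

Lemma dotC x y : dot x y = dot y x.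
Proof. by apply: eq_bigr => i _; rewrite mulrC. Qed.

Lemma dotE x y : dot x y = (x *m y^T) 0 0.
Proof. by rewrite !mxE; apply: eq_bigr => i _; rewrite !mxE. Qed.

Lemma dotDl x y z : dot (x + y) z = dot x z + dot y z.
Proof. by rewrite /dot -big_split; apply: eq_bigr => i _; rewrite mxE mulrDl. Qed.

Lemma dotNl x y : dot (- x) y = - dot x y.
Proof. by rewrite /dot -sumrN; apply: eq_bigr => i _; rewrite mxE mulNr. Qed.

Lemma dotBl x y z : dot (x - y) z = dot x z - dot y z.
Proof. by rewrite dotDl dotNl. Qed.

Lemma dotDr x y z : dot x (y + z) = dot x y + dot x z.
Proof. by rewrite dotC dotDl !(dotC x). Qed.

Lemma dotBr x y z : dot x (y - z) = dot x y - dot x z.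
Proof. by rewrite dotC dotBl !(dotC x). Qed.

Lemma dot0r x : dot x 0 = 0.
Proof. by rewrite /dot big1 // => i _; rewrite mxE mulr0. Qed.

Lemma dot_sumr (I : finType) (F : I -> 'rV[R]_d) x :
  dot x (\sum_i F i) = \sum_i dot x (F i).
Proof.
rewrite /dot exchange_big /=; apply: eq_bigr => j _.
by rewrite summxE mulr_sumr.
Qed.

Lemma sqnorm_ge0 x : 0 <= sqnorm x.
Proof. by apply: sumr_ge0 => i _; rewrite -expr2 sqr_ge0. Qed.

Lemma sqnormD x y : sqnorm (x + y) = sqnorm x + sqnorm y + 2 * dot x y.
Proof. rewrite /sqnorm dotDl !dotDr (dotC y x); ring. Qed.

Lemma sqnormB x y : sqnorm (x - y) = sqnorm x + sqnorm y - 2 * dot x y.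
Proof. rewrite /sqnorm dotBl !dotBr (dotC y x); ring. Qed.

Lemma dot_polar x y : dot x y = (sqnorm x + sqnorm y - sqnorm (x - y)) / 2.
Proof. by rewrite sqnormB; field. Qed.

Lemma sqnormN x : sqnorm (- x) = sqnorm x.
Proof. by rewrite /sqnorm dotNl dotC dotNl opprK. Qed.

Lemma sqnormBC x y : sqnorm (x - y) = sqnorm (y - x).
Proof. by rewrite -opprB sqnormN. Qed.

Lemma sqnormD_le x y : sqnorm (x + y) <= 2 * sqnorm x + 2 * sqnorm y.
Proof. rewrite sqnormD; have := sqnorm_ge0 (x - y); rewrite sqnormB; lra. Qed.

Lemma sum_sqnormB n (q : 'I_n -> 'rV[R]_d) j :
  \sum_l sqnorm (q j - q l) =
  n%:R * sqnorm (q j) + \sum_l sqnorm (q l) - 2 * dot (q j) (\sum_l q l).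
Proof.
under eq_bigr => l _ do rewrite sqnormB.
by rewrite !sumrB big_split /= sumr_const card_ord mulr_natl dot_sumr mulr_sumr.
Qed.

Lemma sum_sqnormB_pairs n (q : 'I_n -> 'rV[R]_d) :
  \sum_j \sum_l sqnorm (q j - q l) =
  2 * n%:R * \sum_j sqnorm (q j) - 2 * sqnorm (\sum_j q j).
Proof.
under eq_bigr => j _ do rewrite sum_sqnormB.
rewrite !sumrB big_split /= sumr_const card_ord -mulr_sumr.
under [X in _ - X]eq_bigr => j _ do rewrite dotC.
rewrite -mulr_sumr -dot_sumr -mulr_natr -/(sqnorm _); ring.
Qed.

Lemma dot_edge_le p a b e :
  sqnorm (a - b) = 1 -> sqnorm (p - b) <= 1 + e -> dot (p - a) (a - b) <= e / 2.
Proof.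
move=> ab; have -> : p - b = (p - a) + (a - b) by rewrite addrA subrK.
rewrite sqnormD ab; have := sqnorm_ge0 (p - a); lra.
Qed.

Lemma dot_edge_ge p q a b e :
  sqnorm (p - q) = 1 -> sqnorm (a - b) = 1 -> sqnorm (q - a) <= 1 + e ->
  - (e + sqnorm ((p - a) - (q - b))) / 2 <= dot (p - a) (a - b).
Proof.
move=> + ab.
have -> : p - q = (a - b) + ((p - a) - (q - b)).
  by apply/rowP => i; rewrite !mxE; ring.
have -> : q - a = (q - b) - (a - b) by rewrite opprB addrA subrK.
rewrite sqnormD (sqnormB (q - b)) ab (dotBr (a - b) (p - a) (q - b)).
rewrite (dotC (a - b) (p - a)) (dotC (q - b) (a - b)).
have := sqnorm_ge0 (q - b); lra.
Qed.

End InnerProduct.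

Section EuclideanDistance.
Context {R : realType} {d : nat}.
Implicit Types x y : 'rV[R]_d.

Lemma sqnorm_edist x y : sqnorm (x - y) = edist x y ^+ 2.
Proof.
rewrite /edist sqr_sqrtr; last by apply: sumr_ge0 => i _; rewrite sqr_ge0.
by apply: eq_bigr => i _; rewrite !mxE expr2.
Qed.

Lemma edist_ge0 x y : 0 <= edist x y.
Proof. exact: sqrtr_ge0. Qed.

Lemma edist_le x y r : 0 <= r -> sqnorm (x - y) <= r ^+ 2 -> edist x y <= r.
Proof. by move=> r0; rewrite -(@ler_sqr _ (edist x y)) ?nnegrE ?edist_ge0 // -sqnorm_edist. Qed.

End EuclideanDistance.

Definition sq_near {R : realFieldType} {d n : nat} (r : R) (A B : 'I_n -> 'rV[R]_d) :=
  forall j, exists k, sqnorm (A j - B k) <= r.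

(* The scalar core of the one-point estimates: N is the number of vertices,
   rho stands for |w - c|^2, and the hypotheses on the sums of the g_k are
   \sum g^2 <= (\sum g)^2, resp. \sum g^2 <= g_max * \sum g. *)
Section CentroidDistance.
Variables (R : realFieldType) (N e rho : R).

Let r2 := (N - 1) / (2 * N).
Let L := (rho + r2 - 1 - e) / 2.

Lemma centroid_sqdist_le : 1 <= N -> 0 <= e ->
  L <= 0 -> rho / 2 + N * L ^+ 2 <= (N * L) ^+ 2 -> rho <= r2 + e.
Proof.
move=> N_ge1 e_ge0 L_le0 sum_sqr_le.
have N_neq0 : N != 0 by rewrite gt_eqF //; lra.
set m := - (2 * N * L).
have m_ge0 : 0 <= m.
  have : 0 <= N * - L by apply: mulr_ge0; lra.
  by rewrite /m; lra.
have mE : m = 1 - N * (rho - r2 - e) by rewrite /m /L /r2; field.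
have : (N - 1) + 2 * N * (rho - r2) <= (N - 1) * m ^+ 2.
  have -> : (N - 1) + 2 * N * (rho - r2) = 2 * N * rho by rewrite /r2; field.
  have -> : (N - 1) * m ^+ 2 = 2 * N * (2 * (N ^+ 2 - N) * L ^+ 2) by rewrite /m; ring.
  by apply: ler_wpM2l; nra.
move=> rho_le; rewrite leNgt; apply/negP => rho_gt.
have m_lt1 : m < 1 by rewrite mE; nra.
have : (N - 1) * m ^+ 2 <= N - 1 by rewrite -[X in _ <= X]mulr1; apply: ler_wpM2l; nra.
nra.
Qed.

Lemma near_vertex_sqdist_le g : 1 <= N -> 0 <= e ->
  r2 - (N - 1) * e <= rho -> rho <= r2 + e ->
  rho / 2 + N * L ^+ 2 <= g * - (N * L) ->
  rho + r2 - 2 * (L + g) <= (N ^+ 2 - 1) * e + N ^+ 2 * e ^+ 2.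
Proof.
move=> N_ge1 e_ge0 rho_ge rho_le sum_sqr_le.
have N_neq0 : N != 0 by rewrite gt_eqF //; lra.
set u := rho - r2.
have TE : - (2 * (N * L)) = 1 + N * (e - u) by rewrite /L /u /r2; field.
have key : (rho + r2 - 2 * (L + g)) * (1 + N * (e - u)) <= N * (e - u) - e + N * u * (e - u).
  have -> : rho + r2 - 2 * (L + g) = 1 + e - 2 * g by rewrite /L /r2; field.
  have -> : N * (e - u) - e + N * u * (e - u) =
      (1 + e) * (1 + N * (e - u)) - 4 * (rho / 2 + N * L ^+ 2).
    by rewrite /L /u /r2; field.
  rewrite -TE; nra.
have lin_le : N * (e - u) - e <= (N ^+ 2 - 1) * e by rewrite /u; nra.
have quad_le : N * u * (e - u) <= N ^+ 2 * e ^+ 2.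
  have N2_ge1 : 1 <= N ^+ 2 by rewrite expr2; nra.
  have : u * (e - u) <= e ^+ 2 by case: (lerP 0 u) => u0; nra.
  case: (lerP 0 (u * (e - u))) => ue0; nra.
have T_ge1 : 1 <= 1 + N * (e - u) by rewrite /u; nra.
set Z := rho + r2 - 2 * (L + g) in key *.
case: (lerP 0 Z) => Z0; nra.
Qed.

End CentroidDistance.

Definition sq_circumradius {R : numFieldType} (d : nat) : R := d%:R / (2 * d.+1%:R).

Definition rough_bound {R : numFieldType} (d : nat) (e : R) : R :=
  (d.+1%:R ^+ 2 - 1) * e + d.+1%:R ^+ 2 * e ^+ 2.

Definition refined_bound {R : numFieldType} (d : nat) (e r : R) : R :=
  2 * d%:R * (e / 2 + 2 * r) ^+ 2.

Section RegularSimplex.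
Context {R : realType} {d : nat} (v : 'I_d.+1 -> 'rV[R]_d).
Hypothesis simplex_v : regular_simplex v.

Let N : R := d.+1%:R.
Let succ_neq0 : 1 + d%:R != 0 :> R. Proof. by rewrite addrC natr1 pnatr_eq0. Qed.
Let dE : d%:R = N - 1. Proof. by rewrite /N -natr1 addrK. Qed.

Lemma sq_circumradiusE : sq_circumradius d = (N - 1) / (2 * N) :> R.
Proof. by rewrite /sq_circumradius dE. Qed.

Definition centroid : 'rV[R]_d := N^-1 *: \sum_k v k.
Definition centered k : 'rV[R]_d := v k - centroid.

Lemma centeredB j k : centered j - centered k = v j - v k.
Proof. by rewrite /centered opprB addrA subrK. Qed.

Lemma sqnorm_vertexB j k : j != k -> sqnorm (v j - v k) = 1.
Proof. by move=> /simplex_v jk; rewrite sqnorm_edist jk expr1n. Qed.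

Lemma sum_sqnorm_vertexB j : \sum_k sqnorm (v j - v k) = d%:R.
Proof.
rewrite (bigD1 j) //= subrr /sqnorm dot0r add0r.
have one k : k != j -> sqnorm (v j - v k) = 1.
  by move=> kj; rewrite sqnorm_vertexB // eq_sym.
by rewrite (eq_bigr _ one) sumr_const cardC1 card_ord.
Qed.

Lemma sum_sqnorm_sub c :
  \sum_k sqnorm (v k - c) = d%:R / 2 + sqnorm (\sum_k (v k - c)) / N.
Proof.
have := sum_sqnormB_pairs _ (fun k => v k - c).
under eq_bigr => j _ do under eq_bigr => k _ do rewrite opprB addrA subrK.
under eq_bigr => j _ do rewrite sum_sqnorm_vertexB.
rewrite sumr_const card_ord -[_ *+ d.+1]mulr_natl -/N.
move: (\sum_j _) (sqnorm _) => S Q pairs.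
have -> : S = (N * d%:R + 2 * Q) / (2 * N) by rewrite pairs; field.
by field.
Qed.

Lemma sum_centered : \sum_k centered k = 0.
Proof.
rewrite sumrB sumr_const card_ord /centroid -scaler_nat scalerA -/N mulfV.
  by rewrite scale1r subrr.
by rewrite pnatr_eq0.
Qed.

Lemma sum_sqnorm_centered : \sum_k sqnorm (centered k) = d%:R / 2.
Proof. by rewrite sum_sqnorm_sub sum_centered /sqnorm dot0r mul0r addr0. Qed.

Lemma sqnorm_centered k : sqnorm (centered k) = sq_circumradius d.
Proof.
have := sum_sqnormB _ centered k.
under eq_bigr => l _ do rewrite centeredB.
rewrite sum_sqnorm_vertexB sum_sqnorm_centered sum_centered dot0r mulr0 subr0.
move: (sqnorm _) => s row.
have -> : s = (d%:R - d%:R / 2) / N by rewrite {1}row; field.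
by rewrite /sq_circumradius; field.
Qed.

Lemma dot_centered j k :
  dot (centered j) (centered k) = (j == k)%:R / 2 - (2 * N)^-1.
Proof.
have [<-|jk] := eqVneq j k.
  by rewrite -/(sqnorm _) sqnorm_centered /sq_circumradius /=; field.
by rewrite dot_polar centeredB sqnorm_vertexB // !sqnorm_centered /sq_circumradius /=; field.
Qed.

Definition centered_mx : 'M[R]_(d.+1, d) := \matrix_k centered k.

Lemma centered_gram :
  centered_mx *m centered_mx^T = 2^-1 *: 1%:M - (2 * N)^-1 *: const_mx 1.
Proof.
apply/matrixP => j k; rewrite !mxE mulr1 mulrC -(dot_centered j k).
by apply: eq_bigr => i _; rewrite !mxE.
Qed.

Lemma const_mx_mul_centered : const_mx 1 *m centered_mx = 0 :> 'M_(d.+1, d).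
Proof.
apply/matrixP => j i; rewrite !mxE.
transitivity ((\sum_k centered k) 0 i); last by rewrite sum_centered mxE.
by rewrite summxE; apply: eq_bigr => k _; rewrite !mxE mul1r.
Qed.

Lemma centered_mx_frame :
  centered_mx *m (centered_mx^T *m centered_mx) = 2^-1 *: centered_mx.
Proof.
by rewrite mulmxA centered_gram mulmxBl -!scalemxAl mul1mx const_mx_mul_centered scaler0 subr0.
Qed.

Definition edge_mx : 'M[R]_d := \matrix_i (v (lift ord0 i) - v ord0).

Lemma edge_gram : edge_mx *m edge_mx^T = 2^-1 *: (1%:M + const_mx 1).
Proof.
apply/matrixP => i j; rewrite !mxE.
transitivity (dot (centered (lift ord0 i) - centered ord0)
                  (centered (lift ord0 j) - centered ord0)).
  by rewrite !centeredB; apply: eq_bigr => l _; rewrite !mxE.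
rewrite dotBl !(dotBr _ (centered _) (centered _)).
rewrite !dot_centered (inj_eq lift_inj) eqxx [lift _ _ == _]eq_sym.
by rewrite !(negbTE (neq_lift _ _)) /=; field.
Qed.

Lemma edge_mx_unit : edge_mx \in unitmx.
Proof.
have J2 : (const_mx 1 : 'M[R]_d) *m const_mx 1 = d%:R *: const_mx 1 :> 'M[R]_d.
  apply/matrixP => i j; rewrite !mxE (eq_bigr (fun=> 1)) ?sumr_const ?card_ord ?mulr1 //.
  by move=> k _; rewrite !mxE mulr1.
have inv : edge_mx *m (edge_mx^T *m (2 *: (1%:M - N^-1 *: const_mx 1))) = 1%:M.
  rewrite mulmxA edge_gram -scalemxAl -scalemxAr scalerA mulVf ?pnatr_eq0 // scale1r.
  rewrite mulmxDl !mulmxBr !mul1mx mulmx1 -scalemxAr J2 scalerA.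
  by apply/matrixP => i j; rewrite !mxE; field.
by case: (mulmx1_unit inv).
Qed.

Lemma edge_mx_frame :
  edge_mx *m (centered_mx^T *m centered_mx) = 2^-1 *: edge_mx.
Proof.
have centered_frame k : centered k *m (centered_mx^T *m centered_mx) = 2^-1 *: centered k.
  by rewrite -(rowK centered k) -row_mul centered_mx_frame linearZ.
apply/row_matrixP => i; rewrite row_mul linearZ /= rowK -!centeredB mulmxBl !centered_frame.
by rewrite -scalerBr.
Qed.

Lemma centered_tight_frame : centered_mx^T *m centered_mx = 2^-1 *: 1%:M.
Proof.
rewrite -[_^T *m _](mulKmx edge_mx_unit) edge_mx_frame -scalemxAr mulVmx //.
exact: edge_mx_unit.
Qed.

Lemma sum_sqr_dot_centered y : \sum_k dot y (centered k) ^+ 2 = sqnorm y / 2.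
Proof.
have dot_row k : (y *m centered_mx^T) 0 k = dot y (centered k).
  by rewrite !mxE; apply: eq_bigr => i _; rewrite !mxE.
transitivity (((y *m centered_mx^T) *m (y *m centered_mx^T)^T) 0 0).
  by rewrite mxE; apply: eq_bigr => k _; rewrite [_^T _ _]mxE dot_row expr2.
rewrite trmx_mul trmxK mulmxA -(mulmxA y) centered_tight_frame -scalemxAr mulmx1.
by rewrite -scalemxAl mxE -dotE mulrC.
Qed.

Lemma sqnorm_le_sum_sqr_dot_edges y m :
  sqnorm y <= 2 * \sum_k dot y (v m - v k) ^+ 2.
Proof.
have cross : \sum_k dot y (centered m) * dot y (centered k) = 0.
  by rewrite -mulr_sumr -dot_sumr sum_centered dot0r mulr0.
under eq_bigr => k _ do rewrite -centeredB dotBr sqrrB.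
rewrite !big_split /= sumrN sumrMnl cross mul0rn subr0.
rewrite sum_sqr_dot_centered sumr_const card_ord.
have := mulrn_wge0 d.+1 (sqr_ge0 (dot y (centered m))); lra.
Qed.

Section NearPoint.
Variables (w : 'rV[R]_d) (e : R).
Hypotheses (e_ge0 : 0 <= e) (near_w : forall k, sqnorm (w - v k) <= 1 + e).

Let y := w - centroid.
Let r2 : R := sq_circumradius d.
Let L := (sqnorm y + r2 - 1 - e) / 2.
Let gap k := dot y (centered k) - L.

Lemma sqnorm_sub_vertex k : sqnorm (w - v k) = sqnorm y + r2 - 2 * dot y (centered k).
Proof.
have -> : w - v k = y - centered k by rewrite /y /centered opprB addrA subrK.
by rewrite sqnormB sqnorm_centered.
Qed.

Let gap_ge0 k : 0 <= gap k.
Proof. by have := near_w k; rewrite sqnorm_sub_vertex /gap /L; lra. Qed.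

Let sum_dot : \sum_k dot y (centered k) = 0.
Proof. by rewrite -dot_sumr sum_centered dot0r. Qed.

Let sum_gap : \sum_k gap k = - (N * L).
Proof. by rewrite sumrB sum_dot sumr_const card_ord -mulr_natl sub0r. Qed.

Let sum_sqr_gap : \sum_k gap k ^+ 2 = sqnorm y / 2 + N * L ^+ 2.
Proof.
transitivity (\sum_k (dot y (centered k) ^+ 2 - 2 * L * dot y (centered k) + L ^+ 2)).
  by apply: eq_bigr => k _; rewrite /gap; ring.
rewrite !big_split /= sumrN -mulr_sumr sum_dot sum_sqr_dot_centered sumr_const card_ord.
by rewrite -mulr_natl; ring.
Qed.

Let N_ge1 : 1 <= N. Proof. by rewrite ler1n. Qed.

Lemma sqnorm_sub_centroid_le : sqnorm (w - centroid) <= sq_circumradius d + e.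
Proof.
have L_le0 : L <= 0.
  have : 0 <= - (N * L) by rewrite -sum_gap sumr_ge0.
  have : 0 < N by rewrite ltr0n.
  nra.
have sum_sqr_le : \sum_k gap k ^+ 2 <= (N * L) ^+ 2.
  rewrite -sqrrN -sum_gap expr2; apply: sum_sqr_le_mul_sum => k.
  by rewrite gap_ge0 ler_term_sum.
have := @centroid_sqdist_le _ N e (sqnorm y) N_ge1 e_ge0.
rewrite -sq_circumradiusE -/r2 -/L -sum_sqr_gap; exact.
Qed.

Lemma exists_near_vertex :
  sq_circumradius d - d%:R * e <= sqnorm (w - centroid) ->
  exists m, sqnorm (w - v m) <= rough_bound d e.
Proof.
move=> rho_ge.
have [m _ gap_max] := @arg_maxP _ R _ ord0 predT gap isT.
exists m; rewrite sqnorm_sub_vertex (_ : dot y (centered m) = L + gap m); last first.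
  by rewrite /gap addrC subrK.
have := @near_vertex_sqdist_le _ N e (sqnorm y) (gap m) N_ge1 e_ge0.
rewrite -sq_circumradiusE -dE -/r2 -/L; apply => //; first exact: sqnorm_sub_centroid_le.
rewrite -sum_gap -sum_sqr_gap; apply: sum_sqr_le_mul_sum => k.
by rewrite gap_ge0; exact: gap_max.
Qed.

End NearPoint.

End RegularSimplex.

Section TwoSimplices.
Context {R : realType} {d : nat} {v w : 'I_d.+1 -> 'rV[R]_d} {e : R}.
Hypotheses (simplex_v : regular_simplex v) (simplex_w : regular_simplex w).
Hypotheses (e_ge0 : 0 <= e) (cross_le : forall j k, sqnorm (w j - v k) <= 1 + e).

Let succ_neq0 : 1 + d%:R != 0 :> R. Proof. by rewrite addrC natr1 pnatr_eq0. Qed.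

Lemma sqnorm_sub_centroid_ge j :
  sq_circumradius d - d%:R * e <= sqnorm (w j - centroid v).
Proof.
have inertia : d%:R / 2 <= \sum_l sqnorm (w l - centroid v).
  by rewrite (sum_sqnorm_sub _ simplex_w) lerDl divr_ge0 ?sqnorm_ge0 ?ler0n.
have others : \sum_(l | l != j) sqnorm (w l - centroid v) <= (sq_circumradius d + e) * d%:R.
  have le_l l : sqnorm (w l - centroid v) <= sq_circumradius d + e.
    exact: sqnorm_sub_centroid_le _ simplex_v _ _ e_ge0 (cross_le l).
  apply: le_trans (ler_sum _ (fun l _ => le_l l)) _.
  by rewrite sumr_const cardC1 card_ord /= [in X in _ <= X]mulr_natr.
have split : d%:R / 2 - (sq_circumradius d + e) * d%:R = sq_circumradius d - d%:R * e.
  by rewrite /sq_circumradius; field.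
rewrite (bigD1 j) //= in inertia; lra.
Qed.

Lemma sq_near_rough : sq_near (rough_bound d e) w v.
Proof.
move=> j; exact: (exists_near_vertex _ simplex_v _ _ e_ge0 (cross_le j) (sqnorm_sub_centroid_ge j)).
Qed.

Lemma sq_near_refine r : r < 4^-1 -> sq_near r w v -> sq_near r v w ->
  sq_near (refined_bound d e r) w v.
Proof.
move=> r_small near_wv near_vw j.
have [m near_m] := near_wv j; exists m.
set h := w j - v m in near_m *.
have coord_sqr k : k != m -> dot h (v m - v k) ^+ 2 <= (e / 2 + 2 * r) ^+ 2.
  move=> km; have vmk : sqnorm (v m - v k) = 1 by rewrite (sqnorm_vertexB _ simplex_v) // eq_sym.
  have [j' near_k] := near_vw k; rewrite sqnormBC in near_k.
  have delta : sqnorm (h - (w j' - v k)) <= 4 * r.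
    by apply: le_trans (sqnormD_le _ _) _; rewrite sqnormN; lra.
  (* w j is already close to v m, so it cannot also be the partner of v k *)
  have jj' : j != j'.
    apply/eqP => jj; move: delta.
    by rewrite /h -jj opprB addrC addrA subrK sqnormBC vmk; lra.
  have wjj' := sqnorm_vertexB _ simplex_w _ _ jj'.
  have := dot_edge_ge (w j) (w j') (v m) (v k) e wjj' vmk (cross_le j' m).
  have := dot_edge_le (w j) (v m) (v k) e vmk (cross_le j k).
  rewrite -/h; have := sqnorm_ge0 h; nra.
have := sqnorm_le_sum_sqr_dot_edges _ simplex_v h m.
rewrite (bigD1 m) //= subrr dot0r expr0n add0r.
have : \sum_(k | k != m) dot h (v m - v k) ^+ 2 <= (e / 2 + 2 * r) ^+ 2 * d%:R.
  apply: le_trans (ler_sum _ coord_sqr) _.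
  by rewrite sumr_const cardC1 card_ord /= [in X in _ <= X]mulr_natr.
rewrite /refined_bound; lra.
Qed.

End TwoSimplices.

Section Numerics.
Context {R : realFieldType} {d : nat} {beta : R}.

Let N : R := d.+1%:R.
Let e := 2 * beta + beta ^+ 2.

Lemma refined_bound_le r c : 0 <= e / 2 + 2 * r <= c ->
  refined_bound d e r <= 2 * d%:R * c ^+ 2.
Proof.
case/andP=> lb_ge0 lb_le; rewrite /refined_bound ler_wpM2l ?mulr_ge0 ?ler0n //.
by rewrite ler_sqr ?nnegrE //; apply: le_trans lb_le.
Qed.

Lemma refinement_bounds : (0 < d)%N -> 0 <= beta -> beta * (4096 * N ^+ 5) < 1 ->
  [/\ rough_bound d e < 4^-1, refined_bound d e (rough_bound d e) < 4^-1 &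
      refined_bound d e (refined_bound d e (rough_bound d e)) <=
      (N * d%:R ^+ 2 * beta) ^+ 2].
Proof.
move=> d_gt0 beta_ge0 beta_small.
have D_ge1 : 1 <= d%:R :> R by rewrite ler1n.
have NE : N = d%:R + 1 by rewrite /N -natr1.
set K := N ^+ 2.
have K_ge4 : 4 <= K by rewrite /K expr2; nra.
have N5E : N ^+ 5 = N * K * K by rewrite /K; ring.
have KN5 : K <= N ^+ 5 by rewrite N5E; nra.
have beta_le : beta * 4096 <= 1.
  have : 1 <= N ^+ 5 by nra.
  nra.
have e_ge0 : 0 <= e by rewrite /e; nra.
have e_le : e <= 9 / 4 * beta by rewrite /e; nra.
have r0_ge0 : 0 <= rough_bound d e by rewrite /rough_bound -/N -/K; nra.
have r0_le : rough_bound d e <= 5 * K * beta.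
  rewrite /rough_bound -/N -/K.
  have e_sqr_le : e ^+ 2 <= e by rewrite expr2; nra.
  have : K * e ^+ 2 <= K * e by apply: ler_wpM2l; lra.
  nra.
have r1_le : refined_bound d e (rough_bound d e) <= beta / 16.
  apply: le_trans (refined_bound_le _ (11 * K * beta) _) _.
    apply/andP; split; nra.
  have : d%:R <= N by rewrite NE; lra.
  have : 0 <= K * K * beta by nra.
  nra.
have r1_ge0 : 0 <= refined_bound d e (rough_bound d e).
  by rewrite /refined_bound; apply: mulr_ge0; [rewrite mulr_ge0 ?ler0n | rewrite sqr_ge0].
split.
- nra.
- lra.
- apply: le_trans (refined_bound_le _ (5 / 4 * beta) _) _.
    apply/andP; split; lra.
  have d4 := @ler_eXnr _ d%:R 4 isT D_ge1.
  have : 25 / 8 * d%:R <= K * d%:R ^+ 4 by nra.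
  rewrite (_ : (N * _ * _) ^+ 2 = K * d%:R ^+ 4 * beta ^+ 2); last by rewrite /K; ring.
  have := sqr_ge0 beta; nra.
Qed.

End Numerics.

Lemma sq_near_le {R : realFieldType} {d n : nat} {A B : 'I_n -> 'rV[R]_d} {r s : R} :
  r <= s -> sq_near r A B -> sq_near s A B.
Proof. by move=> rs near j; have [k ?] := near j; exists k; apply: le_trans rs. Qed.

Lemma sq_near_twice_refined {R : realType} {d : nat} {v w : 'I_d.+1 -> 'rV[R]_d} {e : R} :
  regular_simplex v -> regular_simplex w -> 0 <= e ->
  (forall j k, sqnorm (w j - v k) <= 1 + e) ->
  rough_bound d e < 4^-1 -> refined_bound d e (rough_bound d e) < 4^-1 ->
  let r := refined_bound d e (refined_bound d e (rough_bound d e)) in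
  sq_near r w v /\ sq_near r v w.
Proof.
move=> simplex_v simplex_w e_ge0 cross_wv r0_small r1_small r.
have cross_vw j k : sqnorm (v j - w k) <= 1 + e by rewrite sqnormBC.
have near0_wv := sq_near_rough simplex_v simplex_w e_ge0 cross_wv.
have near0_vw := sq_near_rough simplex_w simplex_v e_ge0 cross_vw.
have near1_wv := sq_near_refine simplex_v simplex_w cross_wv _ r0_small near0_wv near0_vw.
have near1_vw := sq_near_refine simplex_w simplex_v cross_vw _ r0_small near0_vw near0_wv.
split; [exact: sq_near_refine simplex_v simplex_w cross_wv _ r1_small near1_wv near1_vw
       | exact: sq_near_refine simplex_w simplex_v cross_vw _ r1_small near1_vw near1_wv].
Qed.

Local Open Scope classical_set_scope.

Section HausdorffDistance.
Context {R : realType} {d : nat}.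

Lemma edist_le_diam (A : set 'rV[R]_d) M x y :
  (forall z, A z -> sqnorm z <= M) -> A x -> A y -> edist x y <= diam A.
Proof.
move=> A_bounded Ax Ay; apply: ub_le_sup; last by exists x, y.
exists (1 + 4 * M) => _ [a [b [Aa [Ab ->]]]].
have : edist a b <= 1 + edist a b ^+ 2 by have := sqr_ge0 (edist a b - 2^-1); nra.
rewrite -sqnorm_edist; have := sqnormD_le a (- b); rewrite sqnormN.
have := A_bounded a Aa; have := A_bounded b Ab; lra.
Qed.

Lemma sqnorm_cross_le {n} {v w : 'I_n -> 'rV[R]_d} {beta : R} :
  0 <= beta -> diam (range v `|` range w) <= 1 + beta ->
  forall j k, sqnorm (w j - v k) <= 1 + (2 * beta + beta ^+ 2).
Proof.
move=> beta_ge0 diam_le j k.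
pose M := \sum_i (sqnorm (v i) + sqnorm (w i)).
have bounded z : (range v `|` range w) z -> sqnorm z <= M.
  have term_le i : sqnorm (v i) + sqnorm (w i) <= M.
    by apply: ler_term_sum => l; rewrite addr_ge0 ?sqnorm_ge0.
  by case=> -[i _ <-]; have := term_le i; have := sqnorm_ge0 (v i); have := sqnorm_ge0 (w i); lra.
have in_w : (range v `|` range w) (w j) by right; exists j.
have in_v : (range v `|` range w) (v k) by left; exists k.
have := le_trans (edist_le_diam _ _ _ _ bounded in_w in_v) diam_le.
rewrite sqnorm_edist; have := edist_ge0 (w j) (v k); nra.
Qed.

Lemma hexcess_range_le n (A B : 'I_n.+1 -> 'rV[R]_d) r :
  0 <= r -> sq_near (r ^+ 2) A B -> hexcess (range A) (range B) <= r.
Proof.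
move=> r_ge0 near; apply: ge_sup.
  exists (inf [set s | exists b, range B b /\ s = edist (A ord0) b]), (A ord0).
  by split => //; exists ord0.
move=> _ [_ [[j _ <-] ->]]; have [k jk] := near j.
apply: le_trans (edist_le _ _ _ r_ge0 jk); apply: ge_inf.
  by exists 0 => _ [b [_ ->]]; exact: edist_ge0.
by exists (B k); split => //; exists k.
Qed.

Lemma dist_H_range_le n (v w : 'I_n.+1 -> 'rV[R]_d) r : 0 <= r ->
  sq_near (r ^+ 2) v w -> sq_near (r ^+ 2) w v -> dist_H (range v) (range w) <= r.
Proof. by move=> r_ge0 near_vw near_wv; rewrite /dist_H ge_max !hexcess_range_le. Qed.

End HausdorffDistance.

Theorem mainTheorem5 (R : realType) (d : nat) : (1 <= d)%N ->
  exists beta_d : R, 0 < beta_d /\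
    forall (v w : 'I_d.+1 -> 'rV[R]_d) (beta : R),
      regular_simplex v -> regular_simplex w ->
      0 <= beta -> beta < beta_d ->
      diam (range v `|` range w) <= 1 + beta ->
      dist_H (range v) (range w) <= ((d.+1 * d ^ 2)%N)%:R * beta.
Proof.
move=> d_gt0; have scale_gt0 : 0 < 4096 * d.+1%:R ^+ 5 :> R.
  by rewrite mulr_gt0 ?exprn_gt0 ?ltr0n.
exists (4096 * d.+1%:R ^+ 5)^-1; split; first by rewrite invr_gt0.
move=> v w beta simplex_v simplex_w beta_ge0 beta_lt diam_le.
have beta_small : beta * (4096 * d.+1%:R ^+ 5) < 1 by rewrite -ltr_pdivlMr // div1r.
have [r0_small r1_small r2_le] := refinement_bounds d_gt0 beta_ge0 beta_small.
rewrite -natrX -natrM in r2_le.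
have e_ge0 : 0 <= 2 * beta + beta ^+ 2 by rewrite addr_ge0 ?mulr_ge0 ?sqr_ge0.
have [near_wv near_vw] := sq_near_twice_refined simplex_v simplex_w e_ge0
  (sqnorm_cross_le beta_ge0 diam_le) r0_small r1_small.
apply: dist_H_range_le; first by rewrite mulr_ge0.
  exact: sq_near_le r2_le near_vw.
exact: sq_near_le r2_le near_wv.
Qed.
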